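(* Let $\mathcal{P}$ be a finite nonempty set of stochastic trees and $\Pi$ any stochastic partition of $S_\mathcal{P}$. Then $P\preceq\mathcal{P}/\Pi$ for every $P\in\mathcal{P}$.
   Context: $\mathrm{Dist}(S)$ is the set of discrete probability distributions on $S$ (rational probabilities), $\delta_g$ the Dirac distribution on $g$. An LPTS is $\langle S,s^0,\alpha,\tau\rangle$ with finite $S$, start $s^0$, finite actions $\alpha$, finite $\tau\subseteq S\times\alpha\times\mathrm{Dist}(S)$; write $s\xrightarrow{a}\mu$. Strong simulation: $\mu_1\sqsubseteq_R\mu_2$ iff there is $w:S_1\times S_2\to\mathbb{Q}\cap[0,1]$ with $\sum_{s_2}w(s_1,s_2)=\mu_1(s_1)$, $\sum_{s_1}w(s_1,s_2)=\mu_2(s_2)$ and $w(s_1,s_2)>0\Rightarrow s_1Rs_2$; $R$ is a strong simulation iff $s_1Rs_2$ and $s_1\xrightarrow{a}\mu_1$ imply some $s_2\xrightarrow{a}\mu_2$ with $\mu_1\sqsubseteq_R\mu_2$; $L_1\preceq L_2$ iff a strong simulation relates the start states. A stochastic tree is an LPTS whose start state is in the support of no transition's distribution and each other state is in the support of exactly one transition's distribution; for a non-start state $s$, $\mathrm{parent}(s)$ is the source of that transition. $S_\mathcal{P}$ is the (disjoint) union of the state sets of the trees in $\mathcal{P}$. A stochastic partition of $S_\mathcal{P}$ is a pair $(G,\{[s]\}_{s\in S_\mathcal{P}})$ with $G\subseteq 2^{S_\mathcal{P}}$, $\bigcup G=S_\mathcal{P}$, each $[s]$ a partial function $G\to\mathrm{Dist}(G)$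 (convention: $[s](g')(g)=0$ when $[s](g')$ is undefined), such that (1) there is $g^0\in G$ with $[s^0_P](g)=\delta_{g^0}$ for all $P\in\mathcal{P}$, $g\in G$; (2) for non-start $s$ and $g\in G$, $[s](g)$ is defined iff $[\mathrm{parent}(s)](g')(g)>0$ for some $g'$; and $s\in g$ iff $[s](g')(g)>0$ for some $g'$. The quotient $\mathcal{P}/\Pi$ has states $G$, start $g^0$, actions $\bigcup_P\alpha_P$, and transition $(g,a,\mu)$ iff some $P\in\mathcal{P}$ has $s\xrightarrow{a}\mu_p$ with $s\in g$ and $\mu(g')=\sum_{s'\in g'}[s'](g)(g')\mu_p(s')$ for all $g'\in G$. *)

From HB Require Import structures.
From mathcomp Require Import all_boot all_order all_algebra.
Set Implicit Arguments. Unset Strict Implicit. Unset Printing Implicit Defensive.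
Import Order.TTheory GRing.Theory Num.Theory.
Local Open Scope ring_scope.

Definition is_dist (S : finType) (mu : {ffun S -> rat}) : Prop :=
  (forall s, 0 <= mu s) /\ \sum_(s : S) mu s = 1.

Definition dirac (S : finType) (x : S) : {ffun S -> rat} :=
  [ffun y => (y == x)%:R].

(* An LPTS <S, s0, alpha, tau> over the finite state type S and actions in A.
   tau is a finite set of transitions, represented by a duplicate-free list. *)
Record lpts (S : finType) (A : eqType) := LPTS {
  l_start : S;
  l_acts  : seq A;
  l_trans : seq (S * A * {ffun S -> rat})
}.

Definition lpts_wf (S : finType) (A : eqType) (L : lpts S A) : Prop :=
  uniq (l_trans L) /\
  (forall t, t \in l_trans L -> t.1.2 \in l_acts L /\ is_dist t.2).

Definition lift_rel (S1 S2 : finType) (R : S1 -> S2 -> Prop)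
    (mu1 : {ffun S1 -> rat}) (mu2 : {ffun S2 -> rat}) : Prop :=
  exists w : S1 -> S2 -> rat,
    [/\ forall s1 s2, 0 <= w s1 s2 <= 1,
        forall s1, \sum_(s2 : S2) w s1 s2 = mu1 s1,
        forall s2, \sum_(s1 : S1) w s1 s2 = mu2 s2 &
        forall s1 s2, 0 < w s1 s2 -> R s1 s2].

Definition strong_sim (S1 S2 : finType) (A : eqType)
    (L1 : lpts S1 A) (L2 : lpts S2 A) (R : S1 -> S2 -> Prop) : Prop :=
  forall s1 s2 a mu1, R s1 s2 -> (s1, a, mu1) \in l_trans L1 ->
    exists2 mu2, (s2, a, mu2) \in l_trans L2 & lift_rel R mu1 mu2.

Definition simulated (S1 S2 : finType) (A : eqType)
    (L1 : lpts S1 A) (L2 : lpts S2 A) : Prop :=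
  exists R, strong_sim L1 L2 R /\ R (l_start L1) (l_start L2).

Definition stoch_tree (S : finType) (A : eqType) (L : lpts S A) : Prop :=
  [/\ lpts_wf L,
      forall t, t \in l_trans L -> ~~ (0 < t.2 (l_start L)) &
      forall s, s != l_start L -> count (fun t : S * A * {ffun S -> rat} => 0 < t.2 s) (l_trans L) = 1%N].

Definition is_parent (S : finType) (A : eqType) (L : lpts S A) (s p : S) : Prop :=
  exists2 t, t \in l_trans L & (0 < t.2 s) && (t.1.1 == p).

Notation SP S := {i : _ & S i}.

Notation GT G := {g : {set _} | g \in G}.

(* [s](g')(g), with value 0 when [s](g') is undefined *)
Definition clsv (I : finType) (S : I -> finType) (G : {set {set SP S}})
    (cls : SP S -> GT G -> option {ffun GT G -> rat}) (s : SP S) (g' g : GT G) : rat :=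
  if cls s g' is Some mu then mu g else 0.

Definition stoch_partition (A : eqType) (I : finType) (S : I -> finType)
    (P : forall i, lpts (S i) A) (G : {set {set SP S}})
    (cls : SP S -> GT G -> option {ffun GT G -> rat}) (g0 : GT G) : Prop :=
  [/\ \bigcup_(g in G) g = [set: SP S],
      forall (s : SP S) (g : GT G) mu, cls s g = Some mu -> is_dist mu,
      forall i (g : GT G), cls (Tagged S (l_start (P i))) g = Some (dirac g0),
      forall i (x : S i) (p : S i), x != l_start (P i) -> is_parent (P i) x p ->
        forall g : GT G, cls (Tagged S x) g <> None <->
                  exists g', 0 < clsv cls (Tagged S p) g' g &
      forall (s : SP S) (g : GT G), s \in val g <-> exists g', 0 < clsv cls s g' g].

(* distribution of the quotient transition induced by s --a--> mu_p from block g *)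
Definition qmu (I : finType) (S : I -> finType) (G : {set {set SP S}})
    (cls : SP S -> GT G -> option {ffun GT G -> rat}) (g : GT G) (i : I)
    (mu : {ffun S i -> rat}) : {ffun GT G -> rat} :=
  [ffun g' : GT G => \sum_(x : S i | Tagged S x \in val g') clsv cls (Tagged S x) g g' * mu x].

Definition quotient (A : eqType) (I : finType) (S : I -> finType)
    (P : forall i, lpts (S i) A) (G : {set {set SP S}})
    (cls : SP S -> GT G -> option {ffun GT G -> rat}) (g0 : GT G) : lpts (GT G) A :=
  LPTS g0 (flatten [seq l_acts (P i) | i <- enum I])
    (flatten [seq flatten [seq [seq (g, t.1.2, qmu cls g t.2)
                                 | g : GT G <- enum {: GT G} & Tagged S t.1.1 \in val g]
                          | t : S i * A * {ffun S i -> rat} <- l_trans (P i)]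
             | i : I <- enum I]).

From mathcomp Require Import all_boot all_order all_algebra.
Set Implicit Arguments. Unset Strict Implicit. Unset Printing Implicit Defensive.
Import Order.TTheory GRing.Theory Num.Theory.
Local Open Scope ring_scope.

(* P is simulated by the quotient via the relation "x lies in the block g".
   If s lies in g and s --a--> mu in P, then g --a--> mu' in the quotient with
   mu'(g') = sum_(x in g') [x](g)(g') mu(x).  Every x in the support of mu is a child
   of s, and s lies in g, so [x](g) is a distribution whose support consists of blocks
   containing x; hence w(x, g') := [x](g)(g') mu(x) is a weight function witnessing
   mu [= mu'. *)

Lemma is_dist_ge0_le1 (T : finType) (mu : {ffun T -> rat}) (y : T) :
  is_dist mu -> 0 <= mu y <= 1.
Proof.
move=> [mu_ge0 mu_sum1]; rewrite mu_ge0 -mu_sum1 (bigD1 y) //=.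
by rewrite lerDl sumr_ge0.
Qed.

Section QuotientSimulation.

Variables (A : eqType) (I : finType) (S : I -> finType).
Variables (P : forall i, lpts (S i) A) (G : {set {set {i : I & S i}}}).
Variables (cls : {i : I & S i} -> GT G -> option {ffun GT G -> rat}) (g0 : GT G).
Hypothesis partition : stoch_partition P cls g0.

Lemma clsv_ge0_le1 s (g g' : GT G) : 0 <= clsv cls s g g' <= 1.
Proof.
have [_ cls_dist _ _ _] := partition.
rewrite /clsv; case E: (cls s g) => [mu|]; last by rewrite lexx ler01.
exact: is_dist_ge0_le1 (cls_dist _ _ _ E).
Qed.

Lemma clsv_eq0 s (g g' : GT G) : s \notin val g' -> clsv cls s g g' = 0.
Proof.
have [_ _ _ _ memP] := partition.
move=> s_notin; apply/eqP; rewrite eq_le; have /andP[-> _] := clsv_ge0_le1 s g g'.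
rewrite andbT leNgt; apply: contra s_notin => pos.
by apply/memP; exists g.
Qed.

Lemma start_in_start_block i : Tagged S (l_start (P i)) \in val g0.
Proof.
have [_ _ cls_start _ memP] := partition.
by apply/memP; exists g0; rewrite /clsv cls_start ffunE eqxx ltr01.
Qed.

Lemma quotient_trans i (s : S i) a mu (g : GT G) :
  (s, a, mu) \in l_trans (P i) -> Tagged S s \in val g ->
  (g, a, qmu cls g mu) \in l_trans (quotient P cls g0).
Proof.
move=> tr s_in_g; apply/flattenP; exists (flatten
  [seq [seq (g, t.1.2, qmu cls g t.2) | g : GT G <- enum {: GT G} & Tagged S t.1.1 \in val g]
  | t : S i * A * {ffun S i -> rat} <- l_trans (P i)]).
  by apply: map_f; rewrite mem_enum.
apply/flattenP; eexists; first exact: map_f tr.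
by apply: map_f; rewrite mem_filter s_in_g mem_enum.
Qed.

(* A child x of s has [x](g) defined as soon as s lies in g: this is part (2) of the
   definition of a stochastic partition, combined with the membership condition for s. *)
Lemma sum_clsv_child i (s x : S i) a mu (g : GT G) :
  stoch_tree (P i) -> (s, a, mu) \in l_trans (P i) -> 0 < mu x ->
  Tagged S s \in val g -> \sum_g' clsv cls (Tagged S x) g g' = 1.
Proof.
have [_ cls_dist _ cls_defined memP] := partition.
move=> [_ no_start _] tr mu_x_gt0 s_in_g.
have x_nstart : x != l_start (P i).
  by apply: contraTneq (no_start _ tr) => <-; rewrite negbK.
have parent_s : is_parent (P i) x s by exists (s, a, mu); rewrite //= mu_x_gt0 eqxx.
have [_ defined] := cls_defined i x s x_nstart parent_s g.
have [g' clsv_s_gt0] := proj1 (memP (Tagged S s) g) s_in_g.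
case E: (cls (Tagged S x) g) (defined (ex_intro _ g' clsv_s_gt0)) => [m|] // _.
by have [_ <-] := cls_dist _ _ _ E; apply: eq_bigr => g'' _; rewrite /clsv E.
Qed.

Lemma lift_rel_qmu i (s : S i) a mu (g : GT G) :
  stoch_tree (P i) -> (s, a, mu) \in l_trans (P i) -> Tagged S s \in val g ->
  lift_rel (fun x (g' : GT G) => Tagged S x \in val g') mu (qmu cls g mu).
Proof.
move=> tree tr s_in_g.
have [[_ wf] _ _] := tree; have [_ mu_dist] := wf _ tr.
exists (fun x g' => clsv cls (Tagged S x) g g' * mu x); split.
- move=> x g'; have /andP[c0 c1] := clsv_ge0_le1 (Tagged S x) g g'.
  have /andP[m0 m1] := is_dist_ge0_le1 x mu_dist.
  by rewrite mulr_ge0 // mulr_ile1.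
- move=> x; rewrite -mulr_suml.
  have /andP[+ _] := is_dist_ge0_le1 x mu_dist.
  rewrite le0r => /orP[/eqP -> | mu_x_gt0]; first by rewrite mulr0.
  by rewrite (sum_clsv_child tree tr mu_x_gt0 s_in_g) mul1r.
- move=> g'; rewrite /qmu ffunE [RHS]big_mkcond; apply: eq_bigr => x _.
  by case: ifPn => // x_notin; rewrite clsv_eq0 // mul0r.
- move=> x g' w_gt0; apply: contraTT w_gt0 => x_notin.
  by rewrite clsv_eq0 // mul0r ltxx.
Qed.

End QuotientSimulation.

Theorem lemma9 (A : eqType) (I : finType) (S : I -> finType)
    (P : forall i, lpts (S i) A) (G : {set {set {i : I & S i}}})
    (cls : {i : I & S i} -> {g : {set {i : I & S i}} | g \in G} ->
           option {ffun {g : {set {i : I & S i}} | g \in G} -> rat})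
    (g0 : {g : {set {i : I & S i}} | g \in G}) :
  (0 < #|I|)%N ->
  (forall i, stoch_tree (P i)) ->
  stoch_partition P cls g0 ->
  forall i, simulated (P i) (quotient P cls g0).
Proof.
move=> _ trees partition i.
exists (fun x (g : GT G) => Tagged S x \in val g); split; last first.
  exact: start_in_start_block partition i.
move=> s g a mu s_in_g tr; exists (qmu cls g mu).
  exact: quotient_trans tr s_in_g.
exact (lift_rel_qmu partition (trees i) tr s_in_g).
Qed.
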